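(* Let $\bar u\in\mathbb{R}^n_{\ge0}$, $\mathcal{X}=[0,\bar u]$, and let $f:\mathcal{X}\to\mathbb{R}$ be nonnegative and DR-submodular. Let $\mathcal{P}\subseteq\mathcal{X}$ be a nonempty compact down-closed convex set, $x^*\in\arg\max_{x\in\mathcal{P}}f(x)$, $x\in\mathcal{P}$, $z\in\mathcal{P}$ with $z\le \bar u-x$, and $z^*:=x\vee x^*-x$. Then $$f(x\vee x^* )+f(x\wedge x^* )+f(z\vee z^* )+f(z\wedge z^* )\ge f(x^* ).$$
   Context: Vector inequalities are componentwise; $\vee,\wedge$ are coordinatewise max/min. A set $\mathcal{P}\subseteq[0,\bar u]$ is down-closed if $x\in\mathcal{P}$ and $0\le y\le x$ imply $y\in\mathcal{P}$. $f$ is DR-submodular if for all $a\le b$ in $\mathcal{X}$, $i\in[n]$, $k\ge0$ with $a+ke_i,b+ke_i\in\mathcal{X}$, $f(a+ke_i)-f(a)\ge f(b+ke_i)-f(b)$ ($e_i$ the $i$-th standard basis vector). *)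

From mathcomp Require Import all_boot.
From Stdlib Require Import Reals List.
Open Scope R_scope.

Definition Vec (n : nat) := 'I_n -> R.

Definition vzero {n} : Vec n := fun _ => 0.
Definition vle {n} (x y : Vec n) : Prop := forall i, x i <= y i.
Definition vjoin {n} (x y : Vec n) : Vec n := fun i => Rmax (x i) (y i).
Definition vmeet {n} (x y : Vec n) : Vec n := fun i => Rmin (x i) (y i).
Definition vadd {n} (x y : Vec n) : Vec n := fun i => x i + y i.
Definition vsub {n} (x y : Vec n) : Vec n := fun i => x i - y i.
Definition vscale {n} (t : R) (x : Vec n) : Vec n := fun i => t * x i.
Definition kei {n} (i : 'I_n) (k : R) : Vec n :=
  fun j => if j == i then k else 0.

Definition inBox {n} (ubar : Vec n) (x : Vec n) : Prop := vle vzero x /\ vle x ubar.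

Definition subset_box {n} (ubar : Vec n) (P : Vec n -> Prop) : Prop :=
  forall x, P x -> inBox ubar x.

Definition down_closed {n} (P : Vec n -> Prop) : Prop :=
  forall x y, P x -> vle vzero y -> vle y x -> P y.

Definition convex_set {n} (P : Vec n -> Prop) : Prop :=
  forall x y t, P x -> P y -> 0 <= t <= 1 -> P (vadd (vscale t x) (vscale (1 - t) y)).

(* topology of R^n (sup-norm balls; induces the usual topology) *)
Definition vball {n} (c : Vec n) (eps : R) (y : Vec n) : Prop :=
  forall i, Rabs (y i - c i) < eps.
Definition vopen {n} (U : Vec n -> Prop) : Prop :=
  forall x, U x -> exists eps, 0 < eps /\ forall y, vball x eps y -> U y.
Definition vcompact {n} (P : Vec n -> Prop) : Prop :=
  forall (I : Type) (U : I -> Vec n -> Prop),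
    (forall j, vopen (U j)) ->
    (forall x, P x -> exists j, U j x) ->
    exists l : list I, forall x, P x -> exists j, In j l /\ U j x.

Definition DR_submodular {n} (ubar : Vec n) (f : Vec n -> R) : Prop :=
  forall (a b : Vec n) (i : 'I_n) (k : R),
    inBox ubar a -> inBox ubar b -> vle a b -> 0 <= k ->
    inBox ubar (vadd a (kei i k)) -> inBox ubar (vadd b (kei i k)) ->
    f (vadd a (kei i k)) - f a >= f (vadd b (kei i k)) - f b.

(* Write z* = (x v x* ) - x, so that z* + (x ^ x* ) = x* and z* + (z - z ^ z* ) = z v z*.
   DR-submodularity extends from coordinate steps k e_i to arbitrary nonnegative
   increments d (add d one coordinate at a time), i.e. f(a + d) - f(a) is antitone in a.
   Comparing the increment x ^ x* at 0 and at z* gives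
     f(x ^ x* ) - f(0) >= f(x* ) - f(z* ),
   and comparing the increment z - z ^ z* at z* and at x v x* gives
     f(z v z* ) - f(z* ) >= f(x v x* + z - z ^ z* ) - f(x v x* ).
   Adding them and dropping the nonnegative terms f(0), f(x v x* + z - z ^ z* ) and
   f(z ^ z* ) yields the claim; the hypothesis z <= ubar - x keeps x v x* + z - z ^ z*
   inside the box. *)
From mathcomp Require Import all_boot.
From Stdlib Require Import Reals List Lra FunctionalExtensionality.
Open Scope R_scope.

Ltac specialize_coord j :=
  repeat match goal with H : forall _ : 'I_?m, _ |- _ => specialize (H j) end.

Ltac coord_arith :=
  unfold vzero, vadd, vsub, vjoin, vmeet, Rmax, Rmin in *;
  repeat destruct Rle_dec; lra.

Ltac coordwise :=
  unfold inBox, vle in *; try split;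
  let j := fresh "j" in intro j; specialize_coord j; coord_arith.

Section Lattice.
Context {n : nat}.
Implicit Types x y z w : Vec n.

Lemma vadd0v x : vadd vzero x = x.
Proof. apply: functional_extensionality => j; coord_arith. Qed.

Lemma vadd_vsub_vjoin_vmeet x y : vadd (vsub (vjoin x y) x) (vmeet x y) = y.
Proof. apply: functional_extensionality => j; coord_arith. Qed.

Lemma vadd_vsub_vmeet z w : vadd w (vsub z (vmeet z w)) = vjoin z w.
Proof. apply: functional_extensionality => j; coord_arith. Qed.

Lemma inBox_vadd_between {u a d e : Vec n} :
  inBox u a -> inBox u (vadd a d) -> (forall j, 0 <= e j <= d j) ->
  inBox u (vadd a e).
Proof. move=> [? ?] [? ?] ?; coordwise. Qed.

End Lattice.

Section DRVector.
Context {n : nat} {ubar : Vec n} {f : Vec n -> R}.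
Hypothesis f_DR : DR_submodular ubar f.

Definition vprefix (k : nat) (d : Vec n) : Vec n :=
  fun j : 'I_n => if (j < k)%nat then d j else 0.

Lemma vprefix_bounds k {d} : vle vzero d -> forall j, 0 <= vprefix k d j <= d j.
Proof. move=> d_ge0 j; have := d_ge0 j; rewrite /vprefix /vzero; case: ifP => _; lra. Qed.

Lemma vadd_vprefix0 c d : vadd c (vprefix 0 d) = c.
Proof. apply: functional_extensionality => j; rewrite /vadd /vprefix /=; lra. Qed.

Lemma vprefix_full d : vprefix n d = d.
Proof. by apply: functional_extensionality => j; rewrite /vprefix ltn_ord. Qed.

Lemma vadd_vprefixS c d {k} (lt_kn : (k < n)%nat) :
  vadd c (vprefix k.+1 d) =
  vadd (vadd c (vprefix k d)) (kei (Ordinal lt_kn) (d (Ordinal lt_kn))).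
Proof.
apply: functional_extensionality => j; rewrite /vadd /vprefix /kei.
have -> : (j == Ordinal lt_kn) = (nat_of_ord j == k) by [].
rewrite ltnS leq_eqVlt; case: ltngtP => [||j_k] /=; try lra.
have -> : d (Ordinal lt_kn) = d j by congr d; apply: val_inj.
lra.
Qed.

Lemma DR_submodular_vadd a b d :
  inBox ubar a -> inBox ubar b -> vle a b -> vle vzero d ->
  inBox ubar (vadd a d) -> inBox ubar (vadd b d) ->
  f (vadd a d) - f a >= f (vadd b d) - f b.
Proof.
move=> a_box b_box le_ab d_ge0 ad_box bd_box.
suff prefix_DR : forall k, (k <= n)%nat ->
    f (vadd a (vprefix k d)) - f a >= f (vadd b (vprefix k d)) - f b.
  by have := prefix_DR n (leqnn n); rewrite vprefix_full.
elim=> [_|k IHk lt_kn]; first by rewrite !vadd_vprefix0; lra.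
have ak_box := inBox_vadd_between a_box ad_box (vprefix_bounds k d_ge0).
have bk_box := inBox_vadd_between b_box bd_box (vprefix_bounds k d_ge0).
have aS_box := inBox_vadd_between a_box ad_box (vprefix_bounds k.+1 d_ge0).
have bS_box := inBox_vadd_between b_box bd_box (vprefix_bounds k.+1 d_ge0).
rewrite !(vadd_vprefixS _ _ lt_kn) in aS_box bS_box *.
have le_abk : vle (vadd a (vprefix k d)) (vadd b (vprefix k d)).
  by move=> j; rewrite /vadd; have := le_ab j; lra.
have step := f_DR _ _ _ _ ak_box bk_box le_abk (d_ge0 (Ordinal lt_kn)) aS_box bS_box.
have := IHk (ltnW lt_kn); lra.
Qed.

End DRVector.

Theorem claim1 (n : nat) (ubar : Vec n) (f : Vec n -> R) (P : Vec n -> Prop)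
  (x xstar z : Vec n) :
  vle vzero ubar ->
  (forall y, inBox ubar y -> 0 <= f y) ->
  DR_submodular ubar f ->
  subset_box ubar P ->
  (exists y, P y) ->
  vcompact P ->
  down_closed P ->
  convex_set P ->
  P xstar -> (forall y, P y -> f y <= f xstar) ->
  P x -> P z -> vle z (vsub ubar x) ->
  let zstar := vsub (vjoin x xstar) x in
  f (vjoin x xstar) + f (vmeet x xstar) + f (vjoin z zstar) + f (vmeet z zstar)
    >= f xstar.
Proof.
move=> _ f_ge0 f_DR P_box _ _ _ _ Pxstar _ Px Pz le_z_ux zstar.
have [x_ge0 x_le] := P_box _ Px.
have [xstar_ge0 xstar_le] := P_box _ Pxstar.
have [z_ge0 z_le] := P_box _ Pz.
have meet_step : f (vmeet x xstar) - f vzero >= f xstar - f zstar.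
  have := DR_submodular_vadd f_DR vzero zstar (vmeet x xstar).
  rewrite vadd0v vadd_vsub_vjoin_vmeet; apply; rewrite ?vadd0v /zstar; coordwise.
set w := vadd (vjoin x xstar) (vsub z (vmeet z zstar)).
have join_step : f (vjoin z zstar) - f zstar >= f w - f (vjoin x xstar).
  rewrite -vadd_vsub_vmeet; apply: (DR_submodular_vadd f_DR);
    rewrite ?vadd_vsub_vmeet /w /zstar; coordwise.
have : 0 <= f vzero by apply: f_ge0; coordwise.
have : 0 <= f w by apply: f_ge0; rewrite /w /zstar; coordwise.
have : 0 <= f (vmeet z zstar) by apply: f_ge0; rewrite /zstar; coordwise.
lra.
Qed.
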